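(* Let $\Sigma$ be an alphabet, $\triangleleft\notin\Sigma$, and let $L\subseteq\Sigma^*$ be a context-free language all of whose strings have length at least $2$. Then there exists a pop-normalized MPDA $\mathcal A$ with $L(\mathcal A)=\mathrm{Next}(L)$.
   Context: $\mathrm{Next}(L)=\bigcup_{n\in\mathbb N}\{\langle\sigma_2,\sigma_1\rangle\cdots\langle\sigma_n,\sigma_{n-1}\rangle\langle\triangleleft,\sigma_n\rangle\mid\sigma_1,\dots,\sigma_n\in\Sigma,\ \sigma_1\cdots\sigma_n\in L\}$, a language over $(\Sigma\cup\{\triangleleft\})\times\Sigma$. A Moore push-down automaton (MPDA) is $\mathcal A=(Q,\Delta,\Gamma,\delta,\tau,I,F)$ with finite sets $Q$ (states), $\Delta$ (input symbols), $\Gamma$ (stack symbols), transitions $\delta\subseteq(Q\times\Gamma^{\le1}\times\Gamma^{\le1}\times Q)\setminus(Q\times\Gamma\times\Gamma\times Q)$ with $\Gamma^{\le1}=\{\varepsilon\}\cup\Gamma$, output function $\tau:Q\to\Delta$, and $I,F\subseteq Q$. Configurations $\langle q,\alpha\rangle\in Q\times\Gamma^*$; moves $\langle q,\gamma\alpha\rangle\vdash\langle q',\gamma'\alpha\rangle$ for $(q,\gamma,\gamma',q')\in\delta$ whenever $\gamma\alpha\ne\varepsilon$. Initial configurations: $q\in I$, $\alpha\in\Gamma$; final: $q\in F$, $\alpha=\varepsilon$. $L(\mathcal A)$ is the set of $\tau(q_0)\cdots\tau(q_n)$ for runs $\langle q_0,\alpha_0\rangle\vdash\cdots\vdash\langle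 q_n,\alpha_n\rangle$ from an initial to a final configuration. Pop-normalized: there is $\mathrm{return}:\Gamma\to Q$ with $q'=\mathrm{return}(\gamma)$ for every $(q,\gamma,\varepsilon,q')\in\delta$, $\gamma\in\Gamma$. *)

From mathcomp Require Import all_boot.
Set Implicit Arguments. Unset Strict Implicit. Unset Printing Implicit Defensive.

Record CFG (Sigma : finType) := {
  cfg_N : finType;
  cfg_start : cfg_N;
  cfg_prods : seq (cfg_N * seq (cfg_N + Sigma))%type
}.

Section Gen.
Variables (Sigma : finType) (G : CFG Sigma).

Inductive gen_sym : (cfg_N G + Sigma)%type -> seq Sigma -> Prop :=
| gen_term (a : Sigma) : gen_sym (inr a) [:: a]
| gen_nonterm (A : cfg_N G) (rhs : seq (cfg_N G + Sigma)) (w : seq Sigma) :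
    (A, rhs) \in cfg_prods G -> gen_seq rhs w -> gen_sym (inl A) w
with gen_seq : seq (cfg_N G + Sigma) -> seq Sigma -> Prop :=
| gen_nil : gen_seq [::] [::]
| gen_cons X s u v : gen_sym X u -> gen_seq s v -> gen_seq (X :: s) (u ++ v).

Definition cfg_lang (w : seq Sigma) : Prop := gen_sym (inl (cfg_start G)) w.
End Gen.

Definition is_context_free (Sigma : finType) (L : seq Sigma -> Prop) : Prop :=
  exists G : CFG Sigma, forall w, L w <-> cfg_lang G w.

(* ---------- Next(L) ----------
   The fresh symbol "triangleleft" is represented by [None] in [option Sigma].
   For w = s1 ... sn, next_word w = <s2,s1> ... <sn,s_{n-1}> <None,sn>. *)
Definition next_word (Sigma : Type) (w : seq Sigma) : seq (option Sigma * Sigma) :=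
  zip (rcons (map Some (behead w)) None) w.

Definition Next (Sigma : Type) (L : seq Sigma -> Prop)
  (u : seq (option Sigma * Sigma)) : Prop :=
  exists w, L w /\ u = next_word w.

Definition oseq (T : Type) (g : option T) : seq T :=
  if g is Some x then [:: x] else [::].

Record MPDA (Delta : Type) := {
  mp_Q : finType;
  mp_Gamma : finType;
  mp_delta : {set mp_Q * option mp_Gamma * option mp_Gamma * mp_Q};
  mp_delta_wf : forall q g g' q', (q, Some g, Some g', q') \notin mp_delta;
  mp_tau : mp_Q -> Delta;
  mp_I : {set mp_Q};
  mp_F : {set mp_Q}
}.

Section MPDASem.
Variables (Delta : Type) (A : MPDA Delta).

Definition config := (mp_Q A * seq (mp_Gamma A))%type.

Definition mp_step (c c' : config) : Prop :=
  exists q g g' q' (al : seq (mp_Gamma A)),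
    (q, g, g', q') \in mp_delta A /\ oseq g ++ al <> [::] /\
    c = (q, oseq g ++ al) /\ c' = (q', oseq g' ++ al).

Fixpoint is_run (c : config) (cs : seq config) : Prop :=
  if cs is c' :: cs' then mp_step c c' /\ is_run c' cs' else True.

Definition initial_config (c : config) : Prop :=
  c.1 \in mp_I A /\ size c.2 = 1.

Definition final_config (c : config) : Prop :=
  c.1 \in mp_F A /\ c.2 = [::].

Definition mp_lang (u : seq Delta) : Prop :=
  exists (c0 : config) (cs : seq config),
    initial_config c0 /\ is_run c0 cs /\ final_config (last c0 cs) /\
    u = map (fun c : config => @mp_tau _ A c.1) (c0 :: cs).

Definition pop_normalized : Prop :=
  exists ret : mp_Gamma A -> mp_Q A,
    forall q g q', (q, Some g, None, q') \in mp_delta A -> q' = ret g.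
End MPDASem.

(* In a derivation of a word a c ... from the start
   symbol S, the first letter a sits at the bottom of a left spine of S, and the
   rest of the word is derived by the parts of the productions to the right of
   that spine, i.e. by the rests of a chain of dotted items. Reading this right
   context letter by letter unfolds it into a tree of frames (a nonterminal
   with its current item) in which each node reads one letter and has at most
   two children: a grammar in quadratic Greibach normal form, with one start
   frame per first letter. A pushdown automaton traverses such a tree in
   preorder, moving to the first child and pushing the state for the second.
   Its state holds the letter just read together with the next one, so it
   outputs exactly the pairs of Next(L), and it emits the final pair with the
   end marker when it pops the bottom of the stack; since the initial state
   already holds two letters, words must have length at least 2. Stack symbols
   are states and popping one resumes it, so the automaton is pop-normalized. *)

From mathcomp Require Import all_boot boolp zify.
From Pilot Require Import Defs.
Set Implicit Arguments. Unset Strict Implicit. Unset Printing Implicit Defensive.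

Fixpoint next_pairs (T : Type) (p : T) (s : seq T) : seq (option T * T) :=
  if s is c :: s' then (Some c, p) :: next_pairs c s' else [::].

Lemma next_pairs_cat (T : Type) (p : T) s1 s2 :
  next_pairs p (s1 ++ s2) = next_pairs p s1 ++ next_pairs (last p s1) s2.
Proof. by elim: s1 p => //= c s1 IH p; rewrite IH. Qed.

Lemma next_word_pairs (T : Type) (p : T) s :
  next_word (p :: s) = rcons (next_pairs p s) (None, last p s).
Proof. by elim: s p => //= c s IH p; rewrite -IH. Qed.

Section Reach.
Variables (Delta : Type) (A : MPDA Delta).
Local Notation config := (config A).
Local Notation out := (fun c : config => mp_tau c.1).

(* [t] lists the outputs of the configurations of the run except the last, [y]. *)
Inductive reach : config -> config -> seq Delta -> Prop :=
| reach_refl x : reach x x [::]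
| reach_step x y z t : mp_step x y -> reach y z t -> reach x z (mp_tau x.1 :: t).

Lemma reach_trans x y z t1 t2 : reach x y t1 -> reach y z t2 -> reach x z (t1 ++ t2).
Proof. by elim=> // x0 y0 z0 t Hs _ IH /IH; apply: reach_step. Qed.

Lemma is_run_reach x cs : is_run x cs -> reach x (last x cs) (map out (belast x cs)).
Proof.
elim: cs x => [|y cs IH] x /=; first by move=> _; apply: reach_refl.
by case=> Hs /IH; apply: reach_step.
Qed.

Lemma reach_is_run x y t : reach x y t ->
  exists cs, [/\ is_run x cs, last x cs = y & t = map out (belast x cs)].
Proof.
elim=> [x0 | x0 y0 z0 t0 Hs _ [cs [Hr <- ->]]]; first by exists [::].
by exists (y0 :: cs).
Qed.

Lemma mp_langE u : mp_lang A u <->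
  exists x y t, [/\ initial_config x, final_config y, reach x y t & u = rcons t (mp_tau y.1)].
Proof.
split=> [[x [cs [Hi [Hr [Hf ->]]]]] | [x [y [t [Hi Hf /reach_is_run [cs [Hr Hl ->]] ->]]]]].
  exists x, (last x cs), (map out (belast x cs)).
  by rewrite lastI map_rcons; split=> //; apply: is_run_reach.
by exists x, cs; rewrite lastI map_rcons Hl.
Qed.

End Reach.

Section LeftCorner.
Variables (Sigma : finType) (G : CFG Sigma).
Local Notation N := (cfg_N G).
Local Notation sym := (N + Sigma)%type.
Local Notation prods := (cfg_prods G).
Local Notation gen_sym := (@gen_sym _ G).
Local Notation gen_seq := (@gen_seq _ G).

Lemma gen_seq_nilE w : gen_seq [::] w -> w = [::].
Proof. by move=> H; inversion H. Qed.

Lemma gen_seq_consE X s w : gen_seq (X :: s) w ->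
  exists u v, w = u ++ v /\ gen_sym X u /\ gen_seq s v.
Proof. by move=> H; inversion H; exists u, v. Qed.

Lemma gen_seq_cat s1 s2 w1 w2 :
  gen_seq s1 w1 -> gen_seq s2 w2 -> gen_seq (s1 ++ s2) (w1 ++ w2).
Proof.
elim: s1 w1 => [|X s1 IH] w1; first by move=> /gen_seq_nilE ->.
move=> /gen_seq_consE [u [v [-> [Hu Hv]]]] H2.
by rewrite -catA; apply: gen_cons => //; apply: IH.
Qed.

Definition nullable (s : seq sym) : Prop := gen_seq s [::].

Definition max_rhs : nat := \max_(p <- prods) size p.2.

Definition item : finType := ('I_(size prods) * 'I_max_rhs.+1)%type.

Definition lhs (i : item) : N := (nth (cfg_start G, [::]) prods i.1).1.
Definition rhs (i : item) : seq sym := (nth (cfg_start G, [::]) prods i.1).2.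
Definition dot (i : item) : nat := i.2.
Definition rest (i : item) : seq sym := drop (dot i) (rhs i).

Lemma size_rhs_max A r : (A, r) \in prods -> size r <= max_rhs.
Proof. by move=> Hm; apply: (leq_bigmax_seq (F := fun p : N * seq sym => size p.2)) Hm _. Qed.

Lemma item_prod_mem i : (lhs i, rhs i) \in prods.
Proof. by rewrite /lhs /rhs -surjective_pairing mem_nth. Qed.

Lemma item_of_prod A r d : (A, r) \in prods -> d <= size r ->
  exists i : item, [/\ lhs i = A, rhs i = r & dot i = d].
Proof.
move=> Hm hd.
have hd' : d < max_rhs.+1 by rewrite ltnS (leq_trans hd) ?(size_rhs_max Hm).
exists (Ordinal (etrans (index_mem _ _) Hm), Ordinal hd').
by rewrite /lhs /rhs /dot /= nth_index.
Qed.

Definition advance (i : item) (n : nat) : item := (i.1, inord (dot i + n)).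

Lemma rest_advance i g Y b : rest i = g ++ Y :: b ->
  rest (advance i (size g).+1) = b.
Proof.
move=> Hr.
have hsz : size (rhs i) - dot i = size g + (size b).+1.
  by rewrite -size_drop -/(rest i) Hr size_cat.
have hmax : size (rhs i) <= max_rhs := size_rhs_max (item_prod_mem i).
have hdot : dot (advance i (size g).+1) = dot i + (size g).+1 by apply: inordK; lia.
rewrite /rest hdot addnC -drop_drop -/(rest i) Hr.
by rewrite -cat_rcons drop_size_cat ?size_rcons.
Qed.

(* [Y] is a left corner of [lhs i], and [i] is the item just past it. *)
Definition after (Y : sym) (i : item) : Prop :=
  exists g, take (dot i) (rhs i) = rcons g Y /\ nullable g.

Lemma after_rhs Y i : after Y i -> exists g, rhs i = g ++ Y :: rest i /\ nullable g.
Proof.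
case=> g [Ht Hg]; exists g; split=> //.
by rewrite -cat_rcons -Ht cat_take_drop.
Qed.

Lemma item_after A g Y b : (A, g ++ Y :: b) \in prods -> nullable g ->
  exists j, [/\ lhs j = A, after Y j & rest j = b].
Proof.
move=> Hm Hg.
have [|j [Hl Hr Hd]] := item_of_prod Hm (d := (size g).+1).
  by rewrite size_cat /= addnS ltnS leq_addr.
exists j; split=> //.
  by exists g; rewrite Hr Hd -cat_rcons take_size_cat ?size_rcons.
by rewrite /rest Hr Hd -cat_rcons drop_size_cat ?size_rcons.
Qed.

Lemma gen_sym_after Y i u v : after Y i -> gen_sym Y u -> gen_seq (rest i) v ->
  gen_sym (inl (lhs i)) (u ++ v).
Proof.
move=> /after_rhs [g [Hr Hg]] Hu Hv.
apply: gen_nonterm (item_prod_mem i) _.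
by rewrite Hr -[u ++ v]cat0s; apply: gen_seq_cat => //; apply: gen_cons.
Qed.

(* Along a left spine from the item [i] up to [X], the rests of the items derive [v]. *)
Inductive climb (X : N) : item -> seq Sigma -> Prop :=
| climb_stop i v : lhs i = X -> gen_seq (rest i) v -> climb X i v
| climb_up i i' v1 v2 : gen_seq (rest i) v1 -> after (inl (lhs i)) i' ->
    climb X i' v2 -> climb X i (v1 ++ v2).

Lemma climbE X i v : climb X i v ->
  lhs i = X /\ gen_seq (rest i) v \/
  exists i' v1 v2, [/\ v = v1 ++ v2, gen_seq (rest i) v1, after (inl (lhs i)) i'
                     & climb X i' v2].
Proof. by case=> [j w Hl Hw | j j' v1 v2 H1 Ha Hc]; [left | right; exists j', v1, v2]. Qed.

Lemma climb_gen_sym X i w Y u : climb X i w -> after Y i -> gen_sym Y u ->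
  gen_sym (inl X) (u ++ w).
Proof.
move=> Hc; elim: Hc Y u => [j v <- Hv | j j' v1 v2 H1 Ha _ IH] Y u HY Hu.
  exact: gen_sym_after HY Hu Hv.
by rewrite catA; apply: IH Ha _; apply: gen_sym_after HY Hu H1.
Qed.

Lemma climb_cat B i u1 j u2 : climb B i u1 -> after (inl B) j ->
  gen_seq (rest j) u2 -> climb (lhs j) i (u1 ++ u2).
Proof.
elim=> [i0 v Hl Hv | i0 i' v1 v2 H1 Ha _ IH] Hj Hu2.
  by apply: climb_up Hv _ (climb_stop erefl Hu2); rewrite Hl.
by rewrite -catA; apply: climb_up H1 Ha (IH Hj Hu2).
Qed.

Definition left_spine (Y : sym) (c : Sigma) (u : seq Sigma) : Prop :=
  Y = inr c /\ u = [::] \/ exists B i, [/\ Y = inl B, after (inr c) i & climb B i u].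

Lemma left_spine_gen_sym Y c u : left_spine Y c u -> gen_sym Y (c :: u).
Proof.
case=> [[-> ->] | [B [i [-> Ha Hc]]]]; first exact: gen_term.
exact: climb_gen_sym Hc Ha (gen_term G c).
Qed.

Lemma left_spine_after Y c u1 j u2 : left_spine Y c u1 -> after Y j ->
  gen_seq (rest j) u2 -> left_spine (inl (lhs j)) c (u1 ++ u2).
Proof.
move=> [[-> ->] | [B [i [-> Ha Hc]]]] Hj Hu2; right.
  by exists (lhs j), j; split=> //; apply: climb_stop.
by exists (lhs j), i; split=> //; apply: climb_cat Hc Hj Hu2.
Qed.

Definition first_split (s : seq sym) (c : Sigma) (w : seq Sigma) : Prop :=
  exists g Y b u1 u2,
    [/\ s = g ++ Y :: b, nullable g, left_spine Y c u1, gen_seq b u2 & w = u1 ++ u2].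

Scheme gen_sym_mind := Induction for Defs.gen_sym Sort Prop
with gen_seq_mind := Induction for Defs.gen_seq Sort Prop.
Combined Scheme gen_mutind from gen_sym_mind, gen_seq_mind.

Lemma left_spine_complete :
  (forall Y w, gen_sym Y w -> forall c u, w = c :: u -> left_spine Y c u) /\
  (forall s w, gen_seq s w -> forall c u, w = c :: u -> first_split s c u).
Proof.
apply: gen_mutind => //.
- by move=> a c u [<- <-]; left.
- move=> A r w Hm _ IH c u /IH [g [Y [b [u1 [u2 [Hr Hg HY Hb ->]]]]]].
  rewrite Hr in Hm; have [j [<- Hj Hjb]] := item_after Hm Hg.
  by apply: left_spine_after HY Hj _; rewrite Hjb.
move=> X s [|c' u] v HX IHX Hv IHv c u' /= Huv.
  have [g [Y [b [u1 [u2 [-> Hg HY Hb ->]]]]]] := IHv c u' Huv.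
  by exists (X :: g), Y, b, u1, u2; split=> //; apply: (gen_cons HX Hg).
case: Huv => <- <-.
by exists [::], X, s, u, v; split=> //; [apply: gen_nil | apply: IHX].
Qed.

Lemma gen_sym_left_spine Y c u : gen_sym Y (c :: u) -> left_spine Y c u.
Proof. by move=> H; apply: left_spine_complete.1 H c u erefl. Qed.

Lemma gen_seq_first_split s c w : gen_seq s (c :: w) -> first_split s c w.
Proof. by move=> H; apply: left_spine_complete.2 H c w erefl. Qed.

(* Skipping nullable symbols and climbing through nullable rests, [Y] is the next
   symbol to be read from [i], and [j] is the item just past it. *)
Inductive next_item : item -> sym -> item -> Prop :=
| next_here i g Y b : rest i = g ++ Y :: b -> nullable g ->
    next_item i Y (advance i (size g).+1)
| next_up i i' Y j : nullable (rest i) -> after (inl (lhs i)) i' ->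
    next_item i' Y j -> next_item i Y j.

Lemma gen_seq_rest_first i c w : gen_seq (rest i) (c :: w) ->
  exists Y j u1 u2, [/\ next_item i Y j, lhs j = lhs i, left_spine Y c u1,
                       gen_seq (rest j) u2 & w = u1 ++ u2].
Proof.
move=> /gen_seq_first_split [g [Y [b [u1 [u2 [Hr Hg HY Hb ->]]]]]].
exists Y, (advance i (size g).+1), u1, u2.
by split=> //; [apply: next_here Hr Hg | rewrite (rest_advance Hr)].
Qed.

Lemma climb_consE X i c v : climb X i (c :: v) ->
  exists Y j u1 u2, [/\ next_item i Y j, left_spine Y c u1, climb X j u2 & v = u1 ++ u2].
Proof.
move Ew: (c :: v) => w Hc; elim: Hc c v Ew => [i0 w0 Hl Hw | i0 i' v1 v2 H1 Ha Hc IH] c v Ew.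
  rewrite -Ew in Hw; have [Y [j [u1 [u2 [Hn Hj HY Hu2 ->]]]]] := gen_seq_rest_first Hw.
  by exists Y, j, u1, u2; split=> //; apply: climb_stop Hu2; rewrite Hj.
case: v1 H1 Ew => [|c1 v1] H1 /= Ew.
  have [Y [j [u1 [u2 [Hn HY Hu2 ->]]]]] := IH c v Ew.
  by exists Y, j, u1, u2; split=> //; apply: next_up H1 Ha Hn.
case: Ew H1 => <- -> /gen_seq_rest_first [Y [j [u1 [u2 [Hn Hj HY Hu2 ->]]]]].
exists Y, j, u1, (u2 ++ v2); split; rewrite ?catA //.
by apply: climb_up Hu2 _ Hc; rewrite Hj.
Qed.

Lemma climb_next_item i Y j X w u : next_item i Y j -> gen_sym Y w ->
  climb X j u -> climb X i (w ++ u).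
Proof.
elim=> {i Y j} [i g Y b Hr Hg | i i' Y j H1 Ha _ IH] HY Hc; last first.
  by rewrite -[w ++ u]cat0s; apply: climb_up H1 Ha (IH HY Hc).
have Hw v : gen_seq b v -> gen_seq (rest i) (w ++ v).
  by move=> Hv; rewrite Hr -[w ++ v]cat0s; apply: gen_seq_cat Hg (gen_cons HY Hv).
case: (climbE Hc); rewrite (rest_advance Hr).
  by case=> Hl /Hw; apply: climb_stop.
case=> [i' [v1 [v2 [-> /Hw Hv1 Ha Hc']]]].
by rewrite catA; apply: climb_up Hv1 Ha Hc'.
Qed.

End LeftCorner.

Section Frames.
Variables (Sigma : finType) (G : CFG Sigma).
Local Notation N := (cfg_N G).
Local Notation gen_sym := (@gen_sym _ G).
Local Notation climb := (@climb _ G).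

Definition frame : finType := (N * item G)%type.

(* Dropping the frames that derive the empty word makes every frame of a
   [frame_gen] tree read a letter. *)
Definition prune (f : frame) (o : option frame) : Prop :=
  o = Some f \/ o = None /\ climb f.1 f.2 [::].

(* [f] reads [c] through its next symbol [Y]; [o1] continues the left spine of
   [Y] above [c], and [o2] continues [f] past [Y]. *)
Definition frame_step (f : frame) (c : Sigma) (o1 o2 : option frame) : Prop :=
  exists Y j, [/\ next_item f.2 Y j,
    Y = inr c /\ o1 = None \/ exists B i, [/\ Y = inl B, after (inr c) i & prune (B, i) o1]
    & prune (f.1, j) o2].

Inductive frame_gen : option frame -> seq Sigma -> Prop :=
| frame_gen_none : frame_gen None [::]
| frame_gen_step f c o1 o2 u1 u2 : frame_step f c o1 o2 ->
    frame_gen o1 u1 -> frame_gen o2 u2 -> frame_gen (Some f) (c :: u1 ++ u2).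

Lemma frame_gen_noneE w : frame_gen None w -> w = [::].
Proof. by move=> H; inversion H. Qed.

Definition opt_climb (o : option frame) (w : seq Sigma) : Prop :=
  if o is Some f then climb f.1 f.2 w else w = [::].

Lemma prune_climb f o w : prune f o -> opt_climb o w -> climb f.1 f.2 w.
Proof. by case=> [-> | [-> Hc] /= ->]. Qed.

Lemma frame_step_climb f c o1 o2 u1 u2 : frame_step f c o1 o2 ->
  opt_climb o1 u1 -> opt_climb o2 u2 -> climb f.1 f.2 (c :: u1 ++ u2).
Proof.
case=> Y [j [Hn H1 H2]] Hu1 Hu2.
have HY : gen_sym Y (c :: u1).
  case: H1 => [[-> Ho1] | [B [i [-> Ha Hp]]]].
    by move: Hu1; rewrite Ho1 => /= ->; apply: gen_term.
  by apply: left_spine_gen_sym; right; exists B, i; split=> //; apply: prune_climb Hp Hu1.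
exact: climb_next_item Hn HY (prune_climb H2 Hu2).
Qed.

Lemma frame_gen_climb o w : frame_gen o w -> opt_climb o w.
Proof. by elim=> [|f c o1 o2 u1 u2 HS _ Hu1 _ Hu2] //; apply: frame_step_climb HS Hu1 Hu2. Qed.

Lemma climb_frame_gen X i v : climb X i v -> exists o, prune (X, i) o /\ frame_gen o v.
Proof.
have [n] := ubnP (size v); elim: n v X i => // n IHn [|c v] X i Hsz Hc.
  by exists None; split; [right | apply: frame_gen_none].
have [Y [j [u1 [u2 [Hn HY Hu2 Ev]]]]] := climb_consE Hc.
have [Hsz1 Hsz2] : size u1 < n /\ size u2 < n by move: Hsz; rewrite Ev /= size_cat; lia.
have [o2 [Hp2 Hg2]] := IHn _ _ _ Hsz2 Hu2.
have [o1 [H1 Hg1]] : exists o1, (Y = inr c /\ o1 = None \/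
    exists B i1, [/\ Y = inl B, after (inr c) i1 & prune (B, i1) o1]) /\ frame_gen o1 u1.
  case: HY => [[-> ->] | [B [i1 [-> Ha Hc1]]]].
    by exists None; split; [left | apply: frame_gen_none].
  have [o1 [Hp1 Hg1]] := IHn _ _ _ Hsz1 Hc1.
  by exists o1; split=> //; right; exists B, i1.
exists (Some (X, i)); split; first by left.
by rewrite Ev; apply: frame_gen_step Hg1 Hg2; exists Y, j.
Qed.

Lemma gen_sym_frame_gen S a c v : gen_sym (inl S) (a :: c :: v) <->
  exists i, after (inr a) i /\ frame_gen (Some (S, i)) (c :: v).
Proof.
split=> [/gen_sym_left_spine [[] // | [B [i [[<-] Ha Hc]]]] | [i [Ha /frame_gen_climb Hc]]].
  have [o [[-> | [-> _]] Hg]] := climb_frame_gen Hc; first by exists i.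
  by have := frame_gen_noneE Hg.
exact: climb_gen_sym Hc Ha (gen_term G a).
Qed.

Fixpoint frames_gen (fs : seq frame) (w : seq Sigma) : Prop :=
  if fs is f :: fs' then exists u v, [/\ w = u ++ v, frame_gen (Some f) u & frames_gen fs' v]
  else w = [::].

Lemma frames_gen_catE fs1 fs2 w : frames_gen (fs1 ++ fs2) w ->
  exists w1 w2, [/\ w = w1 ++ w2, frames_gen fs1 w1 & frames_gen fs2 w2].
Proof.
elim: fs1 w => [|f fs1 IH] w /=; first by exists [::], w.
case=> u [w' [-> Hu /IH [w1 [w2 [-> H1 H2]]]]].
by exists (u ++ w1), w2; rewrite catA; split=> //; exists u, w1.
Qed.

Lemma frames_gen_oseq o w : frames_gen (oseq o) w -> frame_gen o w.
Proof.
case: o => [f [u [w' [-> Hu ->]]] | ->]; first by rewrite cats0.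
exact: frame_gen_none.
Qed.

Lemma frame_step_gen f c o1 o2 w : frame_step f c o1 o2 ->
  frames_gen (oseq o1 ++ oseq o2) w -> frame_gen (Some f) (c :: w).
Proof.
move=> HS /frames_gen_catE [w1 [w2 [-> /frames_gen_oseq H1 /frames_gen_oseq H2]]].
exact: frame_gen_step HS H1 H2.
Qed.

End Frames.

Section NextAutomaton.
Variables (Sigma : finType) (G : CFG Sigma).
Local Notation frame := (frame G).

(* The state [inr (p, c, f, o1, o2)] outputs the pair [(Some c, p)]: [p] is the
   current letter and the next letter [c] is the first one derived from the
   frame [f], expanded as [frame_step f c o1 o2]; the state [inl a] outputs
   the last pair [(None, a)]. *)
Definition state : finType :=
  (Sigma + Sigma * Sigma * frame * option frame * option frame)%type.

Definition letter (q : state) : Sigma :=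
  match q with inl a => a | inr (p, _, _, _, _) => p end.

Definition frame_of (q : state) : option frame :=
  if q is inr (_, _, f, _, _) then Some f else None.

Definition out (q : state) : option Sigma * Sigma :=
  match q with inl a => (None, a) | inr (p, c, _, _, _) => (Some c, p) end.

Definition move (x : state * option state * option state * state) : Prop :=
  let: (q, g, g', q') := x in
  if q is inr (_, c, f, o1, o2) then
    [/\ frame_step f c o1 o2, letter q' = c &
      match oseq o1 ++ oseq o2 with
      | [::] => g = Some q' /\ g' = None
      | f1 :: fs => [/\ g = None, frame_of q' = Some f1 & map frame_of (oseq g') = map Some fs]
      end]
  else False.

Definition delta : {set state * option state * option state * state} :=
  [set x | `[< move x >]].

Lemma delta_wf q g g' q' : (q, Some g, Some g', q') \notin delta.
Proof.
rewrite inE; apply/negP => /asboolP; case: q => // [[[[[p c] f] o1] o2]] [_ _].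
by case: (oseq o1 ++ oseq o2) => [[_] | f1 fs []].
Qed.

Definition initial_states : {set state} :=
  [set q | `[< exists i, frame_of q = Some (cfg_start G, i) /\ after (inr (letter q)) i >]].

Definition final_states : {set state} := [set q | frame_of q == None].

Definition next_mpda : MPDA (option Sigma * Sigma) := {|
  mp_Q := state; mp_Gamma := state; mp_delta := delta; mp_delta_wf := delta_wf;
  mp_tau := out; mp_I := initial_states; mp_F := final_states |}.

Lemma next_mpda_pop_normalized : pop_normalized next_mpda.
Proof.
exists id => q g q'; rewrite inE => /asboolP.
case: q => // [[[[[p c] f] o1] o2]] [_ _].
by case: (oseq o1 ++ oseq o2) => [[[->]] | f1 fs []].
Qed.

Local Notation config := (config next_mpda).
Local Notation step := (@mp_step _ next_mpda).
Local Notation reach := (@reach _ next_mpda).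

Lemma step_inlE a al y : ~ step (inl a, al) y.
Proof.
by case=> q [g [g' [q' [al0 [Hd [_ [[Eq _] _]]]]]]]; move: Hd; rewrite -Eq inE => /asboolP.
Qed.

Lemma step_inrE p c f o1 o2 al y : step (inr (p, c, f, o1, o2), al) y ->
  [/\ frame_step f c o1 o2, letter y.1 = c &
    exists qs, map frame_of qs = map Some (oseq o1 ++ oseq o2) /\ y.1 :: y.2 = qs ++ al].
Proof.
case=> q0 [g [g' [q' [al0 [Hd [_ [[Eq ->] ->]]]]]]].
move: Hd; rewrite -Eq inE => /asboolP [HS Hl Hm]; split=> //; move: Hm.
case: (oseq o1 ++ oseq o2) => [[-> ->] | f1 fs [-> Hf Hg']]; first by exists [::].
by exists (q' :: oseq g'); rewrite /= Hf Hg'.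
Qed.

Lemma step_inr p c f o1 o2 q al qs y : frame_step f c o1 o2 -> letter y.1 = c ->
  map frame_of qs = map Some (oseq o1 ++ oseq o2) -> y.1 :: y.2 = qs ++ q :: al ->
  step (inr (p, c, f, o1, o2), q :: al) y.
Proof.
case: y => q' s HS /= Hl Hqs Hy.
have Hsz : size qs <= 2.
  by rewrite -(size_map frame_of) Hqs size_map size_cat; case: (o1); case: (o2).
exists (inr (p, c, f, o1, o2)).
case: qs Hqs Hy Hsz Hl => [|q1 [|q2 []]] //= Hqs [-> ->] _ Hl.
- exists (Some q), None, q, al; split=> //; rewrite inE; apply/asboolP; split=> //.
  by case: (oseq o1 ++ oseq o2) Hqs.
- exists None, None, q1, (q :: al); split=> //; rewrite inE; apply/asboolP; split=> //.
  by case: (oseq o1 ++ oseq o2) Hqs => [|f1 fs] //= [-> <-].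
exists None, (Some q2), q1, (q :: al); split=> //; rewrite inE; apply/asboolP; split=> //.
by case: (oseq o1 ++ oseq o2) Hqs => [|f1 fs] //= [-> <-].
Qed.

Lemma frame_gen_reach o w : frame_gen o w -> forall p (x : config), letter x.1 = last p w ->
  exists qs (y : config), [/\ map frame_of qs = map Some (oseq o),
    y.1 :: y.2 = qs ++ x.1 :: x.2, letter y.1 = p & reach y x (next_pairs p w)].
Proof.
elim=> [|f c o1 o2 u1 u2 HS _ IH1 _ IH2] p x Hx.
  by exists [::], x; split=> //; apply: reach_refl.
rewrite /= last_cat in Hx.
have [qs2 [y2 [F2 S2 L2 R2]]] := IH2 _ _ Hx.
have [qs1 [y1 [F1 S1 L1 R1]]] := IH1 _ _ L2.
exists [:: inr (p, c, f, o1, o2)], (inr (p, c, f, o1, o2), x.1 :: x.2); split=> //.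
rewrite /= next_pairs_cat; apply: reach_step (reach_trans R1 R2).
apply: step_inr HS L1 (_ : map frame_of (qs1 ++ qs2) = _) _;
  by rewrite ?map_cat ?F1 ?F2 // S1 S2 catA.
Qed.

Definition stack_frames (al : seq state) : seq frame := pmap frame_of al.

(* A run may start with any stack symbol, but it can only end in a final
   configuration if that symbol is an [inl] state. *)
Definition bottom_inl (al : seq state) : Prop := exists b a, al = rcons b (inl a).

Lemma stack_frames_cat qs fs al : map frame_of qs = map Some fs ->
  stack_frames (qs ++ al) = fs ++ stack_frames al.
Proof. by elim: qs fs => [|q qs IH] [|f fs] //= [-> /IH]; rewrite /stack_frames /= => ->. Qed.

Lemma bottom_inl_catr qs fs al : map frame_of qs = map Some fs ->
  bottom_inl (qs ++ al) -> bottom_inl al.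
Proof.
elim: qs fs => [|q qs IH] [|f fs] //= [Hq /IH {}IH] [[|q' b] [a /= [Eq Hb]]]; last first.
  by apply: IH; exists b, a.
by move: Hq; rewrite Eq.
Qed.

Lemma reach_frames_gen x y t : reach x y t -> final_config y ->
  forall p c f o1 o2, x.1 = inr (p, c, f, o1, o2) ->
  exists v, [/\ t = next_pairs p (c :: v), y.1 = inl (last c v),
              frames_gen (f :: stack_frames x.2) (c :: v) & bottom_inl x.2].
Proof.
elim=> {x y t} [x [Hfx _] | [q al] y z t Hs Hr IH Hf] p c f o1 o2 Ex.
  by move: Hfx; rewrite Ex inE.
move: Ex Hs => /= -> /step_inrE [HS Hl [qs [Hqs Hy]]].
have Hst := stack_frames_cat al Hqs; rewrite -Hy in Hst.
case Eq: y.1 Hl Hy Hst => [a | [[[[p' c'] f'] oa] ob]] /= Hl Hy Hst.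
  have [Ez Et] : z = y /\ t = [::].
    case: Hr Eq => // [[q' s]] y' z' t' Hs' _ /= Eq'.
    by move: Hs'; rewrite Eq' => /step_inlE.
  subst z t; case: Hf => _ Hnil; rewrite Hnil /= in Hy Hst.
  exists [::]; split=> //; first by rewrite Eq Hl.
  - exists [:: c], [::]; split=> //; last by case: (oseq o1 ++ oseq o2) Hst => //= <-.
    by apply: (frame_step_gen HS); case: (oseq o1 ++ oseq o2) Hst.
  by apply: bottom_inl_catr Hqs _; rewrite -Hy; exists [::], a.
have [v [Ht Hz Hg [b [a Hb]]]] := IH Hf _ _ _ _ _ Eq.
rewrite Hst in Hg.
have [w1 [w2 [Ev H1 H2]]] := frames_gen_catE Hg.
exists (c' :: v); split=> //; first by rewrite Ht Hl.
  by exists (c :: w1), w2; rewrite Ev; split=> //; apply: frame_step_gen HS H1.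
by apply: bottom_inl_catr Hqs _; rewrite -Hy Hb; exists (inr (p', c', f', oa, ob) :: b), a.
Qed.

Lemma mp_lang_next_mpda u : mp_lang next_mpda u -> Next (cfg_lang G) u.
Proof.
rewrite mp_langE => -[x [y [t [[Hi Hs] Hf Hr ->]]]].
move: Hi; rewrite inE => /asboolP [i []].
case Ex: x.1 => [//|[[[[a c] f] o1] o2]] /= [Ef] Ha; subst f.
have [v [-> Hy Hg [b [a' Hb]]]] := reach_frames_gen Hr Hf Ex.
have Hst : stack_frames x.2 = [::] by case: b Hb Hs => [|q b] -> //=; rewrite size_rcons.
rewrite Hst in Hg; case: Hg => u1 [u2 [Ev Hu /= Hu2]]; rewrite Hu2 cats0 in Ev; subst u1.
exists (a :: c :: v); split; last by rewrite next_word_pairs Hy.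
by rewrite /cfg_lang gen_sym_frame_gen; exists i.
Qed.

Lemma next_word_mp_lang w : cfg_lang G w -> 2 <= size w -> mp_lang next_mpda (next_word w).
Proof.
case: w => [|a [|c v]] //; rewrite /cfg_lang gen_sym_frame_gen => -[i [Ha Hg]] _.
have [qs [y [Hqs Hy Hl Hr]]] :=
  frame_gen_reach Hg (p := a) (x := (inl (last c v), [::])) erefl.
case: qs Hqs Hy => [|q [|? ?]] //= [Hq] [Ey1 Ey2].
apply/mp_langE; exists y, (inl (last c v), [::]), (next_pairs a (c :: v)); split=> //.
- split; last by rewrite Ey2.
  by rewrite inE; apply/asboolP; exists i; rewrite Ey1 Hq -Ey1 Hl.
- by split=> //; rewrite inE.
by rewrite next_word_pairs.
Qed.

End NextAutomaton.

Theorem corollary3p5 (Sigma : finType) (L : seq Sigma -> Prop) :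
  is_context_free L ->
  (forall w, L w -> 2 <= size w) ->
  exists A : MPDA (option Sigma * Sigma)%type,
    pop_normalized A /\ (forall u, mp_lang A u <-> Next L u).
Proof.
case=> G HG H2; exists (next_mpda G); split; first exact: next_mpda_pop_normalized.
move=> u; split.
  by case/mp_lang_next_mpda => w [/HG Lw ->]; exists w.
by case=> w [Lw ->]; apply: next_word_mp_lang (H2 _ Lw); apply/HG.
Qed.
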